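(* Let $p$ be a prime, $n\ge2$, and $G$ an abstract group; regard $\mathbb{F}_p$ as a trivial $\hat{G}$-module. Then $\hat{G}$ satisfies the $n$-fold vanishing Massey product property if and only if for every (abstract) homomorphism $\varphi:G\to\overline{U_{n+1}(\mathbb{F}_p)}$ there exists an (abstract) homomorphism $\psi:G\to U_{n+1}(\mathbb{F}_p)$ such that $[\psi(g)]_{i,i+1}=[\varphi(g)]_{i,i+1}$ for every $g\in G$ and $1\le i\le n$.
   Context: $\hat{G}$ is the profinite completion of $G$: a profinite group with a homomorphism $i:G\to\hat{G}$ such that every homomorphism from $G$ to a profinite group factors uniquely through a continuous homomorphism from $\hat{G}$; $i(G)$ is dense in $\hat{G}$. $U_{n+1}(\mathbb{F}_p)$ is the group of upper unitriangular $(n+1)\times(n+1)$ matrices over $\mathbb{F}_p$; $\overline{U_{n+1}(\mathbb{F}_p)}$ is its quotient by the central subgroup of matrices supported (off the diagonal) only in the $(1,n+1)$ entry; $[\cdot]_{i,i+1}$ denotes the $(i,i+1)$ entry. A profinite group $H$ acting trivially on $\mathbb{F}_p$ satisfies the $n$-fold vanishing Massey product property if for every continuous homomorphism $\varphi:H\to\overline{U_{n+1}(\mathbb{F}_p)}$ there is a continuous homomorphism $\psi:H\to U_{n+1}(\mathbb{F}_p)$ with $[\psi(h)]_{i,i+1}=[\varphi(h)]_{i,i+1}$ for all $h\in H$, $1\le i\le n$. *)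

From HB Require Import structures.
From mathcomp Require Import all_boot all_order all_algebra all_fingroup.
From mathcomp Require Import boolp classical_sets topology.
Set Implicit Arguments. Unset Strict Implicit. Unset Printing Implicit Defensive.
Import GRing.Theory.
Local Open Scope classical_set_scope.
Local Open Scope group_scope.

(* Groups carrying a topology (no compatibility assumed in the structure;
   compatibility is part of the predicate [topological_group]). *)
#[short(type="groupTopType")]
HB.structure Definition GroupTop := {G of monoid.Group G & Topological G}.

Definition topological_group (H : groupTopType) : Prop :=
  continuous (fun xy : H * H => xy.1 * xy.2) /\ continuous (fun x : H => x^-1).

Definition profinite (H : groupTopType) : Prop :=
  [/\ topological_group H, compact [set: H], hausdorff_space H
    & totally_disconnected [set: H]].

Definition hom (G K : groupType) (f : G -> K) : Prop := {morph f : x y / x * y}.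

Definition is_profinite_completion (G : groupType) (H : groupTopType)
  (i : G -> H) : Prop :=
  [/\ profinite H, hom i,
      (forall (K : groupTopType) (f : G -> K), profinite K -> hom f ->
         exists! g : H -> K, [/\ hom g, continuous g & forall x, g (i x) = f x])
    & dense (range i)].

(* Continuity of a map to a finite (discrete) group: preimages of points open. *)
Definition cont_to_finite (H : topologicalType) (K : finType) (f : H -> K) :=
  forall y : K, open (f @^-1` [set y]).

Definition unitri_set (n p : nat) : {set {'GL_(n.+1)['F_p]}} :=
  [set A : {'GL_(n.+1)['F_p]} | [forall i : 'I_n.+1, forall j : 'I_n.+1,
     ((j < i)%N ==> (GLval A i j == 0%R)) && ((i == j) ==> (GLval A i j == 1%R))]].

(* The central subgroup: unitriangular matrices with support (off the
   diagonal) only in the (1,n+1) entry (0-based: (0,n)). *)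
Definition corner_set (n p : nat) : {set {'GL_(n.+1)['F_p]}} :=
  [set A : {'GL_(n.+1)['F_p]} | (A \in unitri_set n p) &&
     [forall i : 'I_n.+1, forall j : 'I_n.+1,
       ((i < j)%N && ~~ ((i == ord0) && (j == ord_max))) ==> (GLval A i j == 0%R)]].

Section GroupProofs.
Local Open Scope ring_scope.
Lemma unitriP n p (A : {'GL_(n.+1)['F_p]}) :
  reflect (forall i j : 'I_n.+1, ((j < i)%N -> GLval A i j = 0) /\ (i = j -> GLval A i j = 1))
          (A \in unitri_set n p).
Proof.
rewrite finset.inE; apply: (iffP forallP) => [H i j | H i].
  by have /forallP/(_ j)/andP[/implyP h1 /implyP h2] := H i;
     split => [/h1/eqP|e] //; apply/eqP/h2; rewrite e.
apply/forallP => j; have [h1 h2] := H i j; apply/andP; split; apply/implyP.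
  by move/h1 => ->.
by move/eqP/h2 => ->.
Qed.

Lemma unitri_group n p : group_set (unitri_set n p).
Proof.
apply/group_setP; split.
  apply/unitriP => i j; rewrite GL_1E !mxE; split => [ji|->]; last by rewrite eqxx.
  by have -> : (i == j) = false by apply/negP => /eqP e; rewrite e ltnn in ji.
move=> x y /unitriP Hx /unitriP Hy; apply/unitriP => i j; rewrite GL_MxE !mxE; split.
  move=> ji; apply: big1 => k _.
  have [ki|ik] := ltnP k i; first by rewrite (proj1 (Hx i k)) ?mul0r.
  by rewrite (proj1 (Hy k j)) ?mulr0 // (leq_trans ji ik).
move=> <-; rewrite (bigD1 i) //= (proj2 (Hx i i)) // (proj2 (Hy i i)) // mul1r big1 ?addr0 //.
move=> k ki; have [lt|gt] := ltnP k i; first by rewrite (proj1 (Hx i k)) ?mul0r.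
rewrite (proj1 (Hy k i)) ?mulr0 // ltn_neqAle gt andbT.
by apply: contra ki => /eqP/val_inj ->.
Qed.

Lemma cornerP n p (A : {'GL_(n.+1)['F_p]}) :
  reflect (A \in unitri_set n p /\ forall i j : 'I_n.+1, (i < j)%N ->
              ~~ ((i == ord0) && (j == ord_max)) -> GLval A i j = 0)
          (A \in corner_set n p).
Proof.
rewrite [in X in reflect _ X]/corner_set [in X in reflect _ X]finset.in_set.
apply: (iffP andP) => [[hU /forallP H] | [hU H]]; split => //.
  move=> i j ij nc; have /forallP/(_ j)/implyP := H i.
  by rewrite ij nc => /(_ isT)/eqP.
apply/forallP => i; apply/forallP => j; apply/implyP => /andP[ij nc].
by rewrite H.
Qed.

Lemma corner_group n p : group_set (corner_set n p).
Proof.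
apply/group_setP; split.
  apply/cornerP; split; first by rewrite (group1 (Group (unitri_group n p))).
  by move=> i j ij _; rewrite GL_1E !mxE; have -> : (i == j) = false by apply/negP => /eqP e; rewrite e ltnn in ij.
move=> x y /cornerP[xU Hx] /cornerP[yU Hy]; apply/cornerP; split.
  exact: (groupM (G := Group (unitri_group n p))).
have /unitriP Ux := xU; have /unitriP Uy := yU.
move=> i j ij nc; rewrite GL_MxE mxE; apply: big1 => k _.
have [ki|ik] := ltnP k i; first by rewrite (proj1 (Ux i k)) ?mul0r.
have [/eqP eik | neik] := boolP (i == k).
  by rewrite -eik (Hy i j) ?mulr0.
have ik' : (i < k)%N by rewrite ltn_neqAle ik andbT; apply: contra neik => /eqP e; apply/eqP/val_inj.
have [c|nck] := boolP ((i == ord0) && (k == ord_max)).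
  case/andP: c => /eqP ei /eqP ek; subst i k.
  have [jlt|jge] := ltnP j (@ord_max n).
    by rewrite (proj1 (Uy (@ord_max n) j)) ?mulr0.
  have ej : j = @ord_max n by apply/val_inj/eqP; rewrite eqn_leq jge -ltnS ltn_ord.
  by move: nc; rewrite ej !eqxx.
by rewrite (Hx i k) ?mul0r.
Qed.

End GroupProofs.

Definition Unitri (n p : nat) : {group {'GL_(n.+1)['F_p]}} := Group (unitri_group n p).
Definition Corner (n p : nat) : {group {'GL_(n.+1)['F_p]}} := Group (corner_group n p).
Definition Ubar (n p : nat) : {group coset_of (Corner n p)} := (Unitri n p / Corner n p)%G.

(* superdiagonal entry [A]_{i,i+1} (0-based: i : 'I_n, entry (i, i+1)) *)
Definition supdiag (n p : nat) (A : {'GL_(n.+1)['F_p]}) (i : 'I_n) : 'F_p :=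
  GLval A (widen_ord (leqnSn n) i) (lift ord0 i).
Definition supdiag_bar (n p : nat) (C : coset_of (Corner n p)) (i : 'I_n) : 'F_p :=
  supdiag (repr C) i.

Definition massey_vanishing (n p : nat) (H : groupTopType) : Prop :=
  forall phi : H -> coset_of (Corner n p),
    (forall h, phi h \in Ubar n p) -> hom phi -> cont_to_finite phi ->
    exists psi : H -> {'GL_(n.+1)['F_p]},
      [/\ forall h, psi h \in Unitri n p, hom psi, cont_to_finite psi
        & forall h (i : 'I_n), supdiag (psi h) i = supdiag_bar (phi h) i].

Definition abstract_massey_lifting (n p : nat) (G : groupType) : Prop :=
  forall phi : G -> coset_of (Corner n p),
    (forall g, phi g \in Ubar n p) -> hom phi ->
    exists psi : G -> {'GL_(n.+1)['F_p]},
      [/\ forall g, psi g \in Unitri n p, hom psi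
        & forall g (i : 'I_n), supdiag (psi g) i = supdiag_bar (phi g) i].

(* A homomorphism from G to a finite group K is the same as a continuous
   homomorphism from the profinite completion to K (give K the discrete
   topology and use the universal property), and restriction along i inverts
   this correspondence.  A pointwise relation between two maps into finite
   sets that are continuous (i.e. locally constant) defines an open set, so
   if it holds on the dense image of G it holds everywhere; this transfers
   membership in U_{n+1} and Ubar and the equality of superdiagonal entries
   between G and its completion. *)
From HB Require Import structures.
From mathcomp Require Import all_boot all_order all_algebra all_fingroup.
From mathcomp Require Import boolp classical_sets cardinality topology.
Set Implicit Arguments. Unset Strict Implicit. Unset Printing Implicit Defensive.
Local Open Scope classical_set_scope.
Local Open Scope group_scope.

HB.instance Definition _ (T : finGroupType) :=
  monoid.Group.copy (discrete_topology T) T.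

Lemma isolated_continuous_at (X Y : topologicalType) (f : X -> Y) (x : X) :
  nbhs x [set x] -> {for x, continuous f}.
Proof.
move=> x_isolated A /= Afx.
by apply: (filterS _ x_isolated) => y /= ->; exact: nbhs_singleton.
Qed.

Lemma discrete_continuous (X : discreteTopologicalType) (Y : topologicalType)
  (f : X -> Y) : continuous f.
Proof. by move=> x; apply: isolated_continuous_at; exact: discrete_set1. Qed.

Lemma discrete_prod_continuous (X1 X2 : discreteTopologicalType)
  (Y : topologicalType) (f : X1 * X2 -> Y) : continuous f.
Proof.
move=> [x1 x2]; apply: isolated_continuous_at.
exists ([set x1], [set x2]); first by split; exact: discrete_set1.
by move=> [y1 y2] [/= -> ->].
Qed.

Lemma finite_discrete_profinite (T : finGroupType) :
  profinite (discrete_topology T).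
Proof.
split.
- by split; [exact: discrete_prod_continuous | exact: discrete_continuous].
- by apply: finite_compact; exact: finite_finset.
- exact: discrete_hausdorff.
- exact: zero_dimension_totally_disconnected discrete_zero_dimension.
Qed.

Lemma continuous_cont_to_finite (X : topologicalType) (K : finType)
  (f : X -> discrete_topology K) : continuous f -> cont_to_finite (f : X -> K).
Proof. by move=> /continuousP f_cont y; apply: f_cont; exact: discrete_open. Qed.

Lemma cont_to_finite_rel_open (X : topologicalType) (K1 K2 : finType)
  (f1 : X -> K1) (f2 : X -> K2) (R : K1 -> K2 -> Prop) :
  cont_to_finite f1 -> cont_to_finite f2 -> open [set x | R (f1 x) (f2 x)].
Proof.
move=> f1_cont f2_cont.
have -> : [set x | R (f1 x) (f2 x)] = \bigcup_(a in [set: K1])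
    \bigcup_(b in [set b | R a b]) (f1 @^-1` [set a] `&` f2 @^-1` [set b]).
  apply/seteqP; split => [x Rx | x [a _ [b Rab [/= -> ->]]]] //.
  by exists (f1 x) => //; exists (f2 x).
by do 2 apply: bigcup_open => ? _; exact: openI.
Qed.

Lemma dense_cont_to_finite_rel (G : Type) (X : topologicalType)
  (K1 K2 : finType) (i : G -> X) (f1 : X -> K1) (f2 : X -> K2)
  (R : K1 -> K2 -> Prop) :
  dense (range i) -> cont_to_finite f1 -> cont_to_finite f2 ->
  (forall g, R (f1 (i g)) (f2 (i g))) -> forall x, R (f1 x) (f2 x).
Proof.
move=> i_dense f1_cont f2_cont R_on_range x; apply: contrapT => notRx.
have notR_open := cont_to_finite_rel_open (fun a b => ~ R a b) f1_cont f2_cont.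
have [y [notRy [g _ gy]]] := i_dense _ (ex_intro _ x notRx) notR_open.
by apply: notRy; rewrite -gy; exact: R_on_range.
Qed.

Section ProfiniteCompletion.
Variables (G : groupType) (H : groupTopType) (i : G -> H).
Hypothesis i_completion : is_profinite_completion i.

Lemma completion_extend_hom (K : finGroupType) (f : G -> K) : hom f ->
  exists g : H -> K, [/\ hom g, cont_to_finite g & forall x, g (i x) = f x].
Proof.
case: i_completion => _ _ universal _ f_hom.
have [g [[g_hom g_cont gi] _]] :=
  universal (discrete_topology K) f (finite_discrete_profinite K) f_hom.
by exists g; split => //; exact: continuous_cont_to_finite.
Qed.

Lemma completion_restrict_hom (K : groupType) (f : H -> K) :
  hom f -> hom (fun x => f (i x)).
Proof. by case: i_completion => _ i_hom _ _ f_hom x y; rewrite i_hom f_hom. Qed.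

Lemma completion_dense_rel (K1 K2 : finType) (f1 : H -> K1) (f2 : H -> K2)
  (R : K1 -> K2 -> Prop) : cont_to_finite f1 -> cont_to_finite f2 ->
  (forall g, R (f1 (i g)) (f2 (i g))) -> forall x, R (f1 x) (f2 x).
Proof. by case: i_completion => _ _ _; exact: dense_cont_to_finite_rel. Qed.

Variables (n p : nat).

Lemma massey_vanishing_abstract_lifting :
  massey_vanishing n p H -> abstract_massey_lifting n p G.
Proof.
move=> vanishing phi phi_Ubar phi_hom.
have [phih [phih_hom phih_cont phih_i]] := completion_extend_hom phi_hom.
have phih_Ubar h : phih h \in Ubar n p.
  apply: (completion_dense_rel (R := fun a _ => a \in Ubar n p) phih_cont
    phih_cont _ h) => g.
  by rewrite phih_i phi_Ubar.
have [psih [psih_U psih_hom _ psih_diag]] :=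
  vanishing phih phih_Ubar phih_hom phih_cont.
exists (fun g => psih (i g)); split => //.
- exact: completion_restrict_hom.
- by move=> g k; rewrite psih_diag phih_i.
Qed.

Lemma abstract_lifting_massey_vanishing :
  abstract_massey_lifting n p G -> massey_vanishing n p H.
Proof.
move=> lifting phi phi_Ubar phi_hom phi_cont.
have [psi [psi_U psi_hom psi_diag]] :=
  lifting _ (fun g => phi_Ubar (i g)) (completion_restrict_hom phi_hom).
have [psih [psih_hom psih_cont psih_i]] := completion_extend_hom psi_hom.
exists psih; split => //.
- move=> h; apply: (completion_dense_rel (R := fun a _ => a \in Unitri n p)
    psih_cont psih_cont _ h) => g.
  by rewrite psih_i psi_U.
- move=> h k; apply: (completion_dense_rel (R :=
    fun a b => supdiag a k = supdiag_bar b k) psih_cont phi_cont _ h) => g.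
  by rewrite psih_i psi_diag.
Qed.

End ProfiniteCompletion.

Theorem mainTheorem5 (p n : nat) (hp : prime p) (hn : (2 <= n)%N)
  (G : groupType) (H : groupTopType) (i : G -> H) :
  is_profinite_completion i ->
  (massey_vanishing n p H <-> abstract_massey_lifting n p G).
Proof.
move=> i_completion; split.
- exact: (@massey_vanishing_abstract_lifting _ _ _ i_completion n p).
- exact: (@abstract_lifting_massey_vanishing _ _ _ i_completion n p).
Qed.
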